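(* Let $\beta,p$ be positive integers with $\beta\ge p$. Then $C(1,\beta,p)=C_{WWL}(\beta,p)$.
   Context: Memory cells are binary; cell-state vectors of $n$ cells lie in $\{0,1\}^n$. A code on $n$ cells consists, for each write $i\ge1$, of a real $R_i\ge0$, an encoder $\mathcal{E}_i:\{1,\ldots,\lfloor2^{nR_i}\rfloor\}\times\{0,1\}^n\to\{0,1\}^n$ and decoder $\mathcal{D}_i$ with $\mathcal{D}_i(\mathcal{E}_i(m,\mathbf{u}))=m$ (both may depend on $i$; the decoder sees only the current state). Starting from $\mathbf{v}_0=\mathbf{0}$, messages produce states $\mathbf{v}_i=\mathcal{E}_i(m_i,\mathbf{v}_{i-1})$. The code is $(\alpha,\beta,p)$-constrained if for every message sequence, every $i\ge0$ and every $1\le j\le n-\beta+1$, $|\{(k,\ell): v_{i+k,j+\ell}\ne v_{i+k+1,j+\ell}, 0\le k<\alpha, 0\le\ell<\beta\}|\le p$. Rate: $\lim_{m\to\infty}\frac1m\sum_{i=1}^mR_i$. $C_n(\alpha,\beta,p)$ is the supremum of rates of $(\alpha,\beta,p)$-constrained codes on $n$ cells and $C(\alpha,\beta,p)=\lim_{n\to\infty}C_n(\alpha,\beta,p)$. A binary vector is $(\beta,p)$-window-weight-limited (WWL) if every $\beta$ consecutive entries contain at most $p$ ones; with $\mathcal{S}_n(\beta,p)$ the set of such vectors of length $n$, $C_{WWL}(\beta,p)=\lim_{n\to\infty}\frac1n\log_2|\mathcal{S}_n(\beta,p)|$. *)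

From HB Require Import structures.
From mathcomp Require Import all_boot all_order all_algebra.
From mathcomp Require Import all_classical all_reals all_analysis.
Set Implicit Arguments. Unset Strict Implicit. Unset Printing Implicit Defensive.
Import Order.TTheory GRing.Theory Num.Theory.
Import numFieldNormedType.Exports.
Local Open Scope classical_set_scope.
Local Open Scope ring_scope.

Definition cell (n : nat) (v : n.-tuple bool) (t : nat) : bool := nth false v t.

(* A (candidate) code on n cells.  Writes are indexed by i >= 1 (the data at
   index 0 is irrelevant).  Messages of write i are the naturals
   1 <= m <= floor(2^(n R_i)). *)
Record code (R : realType) (n : nat) := Code {
  wrate : nat -> R;
  enc   : nat -> nat -> n.-tuple bool -> n.-tuple bool;
  dec   : nat -> n.-tuple bool -> nat
}.

Definition nmsg (R : realType) (n : nat) (r : R) : nat :=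
  Num.truncn (2 `^ (n%:R * r)).

Definition is_msg (R : realType) n (c : code R n) (i m : nat) : bool :=
  (1 <= m <= nmsg n (wrate c i))%N.

Definition valid_code (R : realType) n (c : code R n) : Prop :=
  forall i : nat, (1 <= i)%N ->
    0 <= wrate c i /\
    forall (m : nat) (u : n.-tuple bool), is_msg c i m -> dec c i (enc c i m u) = m.

Fixpoint state (R : realType) n (c : code R n) (ms : nat -> nat) (i : nat)
  : n.-tuple bool :=
  match i with
  | 0 => [tuple of nseq n false]
  | i'.+1 => enc c i'.+1 (ms i'.+1) (state c ms i')
  end.

(* number of cell changes within writes i..i+alpha and cells j..j+beta-1 (0-indexed j) *)
Definition nchanges (R : realType) n (c : code R n) (ms : nat -> nat)
  (alpha beta i j : nat) : nat :=
  (\sum_(k < alpha) \sum_(l < beta)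
     (cell (state c ms (i + k)) (j + l) != cell (state c ms (i + k).+1) (j + l)))%N.

Definition constrained (R : realType) n (c : code R n) (alpha beta p : nat) : Prop :=
  forall ms : nat -> nat, (forall i, (1 <= i)%N -> is_msg c i (ms i)) ->
    forall i j : nat, (j + beta <= n)%N -> (nchanges c ms alpha beta i j <= p)%N.

Definition has_rate (R : realType) n (c : code R n) (r : R) : Prop :=
  (fun m : nat => (m%:R)^-1 * \sum_(1 <= i < m.+1) wrate c i) @ \oo --> r.

Definition Cn (R : realType) (n alpha beta p : nat) : R :=
  sup [set r : R | exists c : code R n,
         valid_code c /\ constrained c alpha beta p /\ has_rate c r].

Definition wwl (n beta p : nat) (v : n.-tuple bool) : bool :=
  [forall j : 'I_n.+1, (j + beta <= n)%N ==>
     (\sum_(l < beta) cell v (j + l) <= p)%N].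

Definition S_card (n beta p : nat) : nat := #|[set v : n.-tuple bool | wwl beta p v]|.

Definition log2 (R : realType) (x : R) : R := ln x / ln 2.

Definition wwl_rate (R : realType) (beta p n : nat) : R :=
  (n%:R)^-1 * log2 ((S_card n beta p)%:R : R).

(* A single write is (1,beta,p)-constrained exactly when its pattern of changed
   cells u + v (bitwise xor) is a (beta,p)-WWL word, i.e. lies in S = S_n(beta,p).
   Upper bound: from a fixed state the messages of one write yield distinct
   patterns in S, so 2^(n R_i) < 2|S|.  Lower bound: there is a xor-closed set C
   with |C| |S| <= 2(n+1) 2^n and S + C = {0,1}^n (adjoin shifts greedily; each
   step squares the uncovered fraction); writing the message as the coset of C
   containing the state, every coset is reachable from every state by a pattern
   in S, which gives rate log2(2^n/|C|)/n.  Hence C_n(1,beta,p) is within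
   log2(2(n+1))/n of log2|S_n|/n, and the latter converges since log2|S_n| is
   subadditive (Fekete). *)
From Pilot Require Import Defs.
From HB Require Import structures.
From mathcomp Require Import all_boot all_order all_algebra.
From mathcomp Require Import all_classical all_reals all_analysis.
From mathcomp Require Import zify ring lra.
Import Order.TTheory GRing.Theory Num.Theory.
Import numFieldNormedType.Exports.
Local Open Scope ring_scope.
Set Implicit Arguments. Unset Strict Implicit. Unset Printing Implicit Defensive.

Section TupleXor.
Variable n : nat.
Implicit Types u v w : n.-tuple bool.

Definition txor u v : n.-tuple bool :=
  [tuple of map (fun ab : bool * bool => ab.1 (+) ab.2) (zip u v)].

Definition zero_tuple : n.-tuple bool := [tuple of nseq n false].

Lemma cell_out v t : (n <= t)%N -> cell v t = false.
Proof. by move=> h; rewrite /cell nth_default // size_tuple. Qed.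

Lemma cell_txor u v t : cell (txor u v) t = cell u t (+) cell v t.
Proof.
case: (ltnP t n) => ht; last by rewrite !cell_out.
rewrite /cell (nth_map (false, false)); last by rewrite size_zip !size_tuple minnn.
by rewrite nth_zip ?size_tuple.
Qed.

Lemma cell_zero_tuple t : cell zero_tuple t = false.
Proof. by rewrite /cell nth_nseq if_same. Qed.

Lemma eq_tuple_cell u v : (forall t, cell u t = cell v t) -> u = v.
Proof.
move=> h; apply: val_inj; apply: (@eq_from_nth _ false); first by rewrite !size_tuple.
by move=> i _; exact: h.
Qed.

Lemma txorA u v w : txor u (txor v w) = txor (txor u v) w.
Proof. by apply: eq_tuple_cell => t; rewrite !cell_txor addbA. Qed.

Lemma txorC u v : txor u v = txor v u.
Proof. by apply: eq_tuple_cell => t; rewrite !cell_txor addbC. Qed.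

Lemma txorK u v : txor u (txor u v) = v.
Proof. by apply: eq_tuple_cell => t; rewrite !cell_txor addKb. Qed.

Lemma txor0 u : txor u zero_tuple = u.
Proof. by apply: eq_tuple_cell => t; rewrite cell_txor cell_zero_tuple addbF. Qed.

Lemma txorvv u : txor u u = zero_tuple.
Proof. by apply: eq_tuple_cell => t; rewrite cell_txor cell_zero_tuple addbb. Qed.

Lemma txor_inj u : injective (txor u).
Proof. by move=> a b h; rewrite -(txorK u a) h txorK. Qed.

End TupleXor.

Lemma exprn_one_sub_le_expR (R : realType) (x : R) k :
  x <= 1 -> (1 - x) ^+ k <= expR (- (k%:R * x)).
Proof.
move=> x1; rewrite -mulrN expRM_natl; apply: lerXn2r.
- by rewrite nnegrE subr_ge0.
- by rewrite nnegrE ltW // expR_gt0.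
- exact: expR_ge1Dx.
Qed.

Lemma expn2_mul_expR_lt1 (R : realType) n : (2 ^ n)%:R * expR (- n.+1%:R) < 1 :> R.
Proof.
have : (2 : R) ^+ n.+1 <= expR n.+1%:R.
  rewrite -[X in expR X]mulr1 expRM_natl; apply: lerXn2r.
  - by rewrite nnegrE.
  - by rewrite nnegrE ltW // expR_gt0.
  - by have := expR_ge1Dx (1 : R).
rewrite expRN natrX exprS => h.
rewrite mulrC ltr_pdivrMl ?expR_gt0 // mulr1.
apply: lt_le_trans h; rewrite ltr_pMl ?exprn_gt0 //; lra.
Qed.

Lemma exists_le_mean (T : finType) (x0 : T) (F : T -> nat) :
  exists x, (F x * #|T| <= \sum_y F y)%N.
Proof.
case: (boolP [exists x, F x * #|T| <= \sum_y F y]%N) => [/existsP//|/existsPn h].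
have : (\sum_(x : T) (\sum_y F y).+1 <= \sum_(x : T) F x * #|T|)%N.
  by apply: leq_sum => x _; rewrite ltnNge h.
have hT : (0 < #|T|)%N by apply/card_gt0P; exists x0.
by rewrite -big_distrl /= sum_nat_const [X in (_ <= X)%N]mulnC leq_pmul2l // ltnn.
Qed.

Section Covering.
Variable n : nat.
Implicit Types S C U : {set n.-tuple bool}.

Definition xor_closed C :=
  zero_tuple n \in C /\ forall c c', c \in C -> c' \in C -> txor c c' \in C.

Definition uncovered S C := [set v | [forall c in C, txor v c \notin S]].

Lemma sum_card_setI_txor U :
  (\sum_x #|U :&: [set v | txor v x \in U]| = #|U| * #|U|)%N.
Proof.
transitivity (\sum_x \sum_v ((v \in U) && (txor v x \in U) : nat))%N.
  apply: eq_bigr => x _; rewrite -sum1_card big_mkcond /=.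
  by apply: eq_bigr => v _; rewrite !inE; case: (_ && _).
rewrite exchange_big /= -sum_nat_const [in RHS]big_mkcond /=.
apply: eq_bigr => v _; case: (boolP (v \in U)) => hv /=; last by rewrite big1.
rewrite -(card_preimset U (@txor_inj n v)) -sum1_card [in RHS]big_mkcond /=.
by apply: eq_bigr => x _; rewrite !inE txorC; case: (_ \in U).
Qed.

(* [C'] adds to [C] its shift by an [x] for which few points [v] have both [v]
   and [v + x] uncovered; averaging over [x] bounds their number by [|U|^2/2^n]. *)
Lemma xor_closed_double S C : xor_closed C ->
  exists C', [/\ xor_closed C', (#|C'| <= 2 * #|C|)%N &
    (#|uncovered S C'| * 2 ^ n <= #|uncovered S C| * #|uncovered S C|)%N].
Proof.
move=> [C0 CC].
have [x hx] := exists_le_mean (zero_tuple n)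
  (fun x => #|uncovered S C :&: [set v | txor v x \in uncovered S C]|).
rewrite sum_card_setI_txor card_tuple card_bool in hx.
exists (C :|: [set txor c x | c in C]); split.
- split; first by rewrite inE C0.
  move=> a b; rewrite !inE => /orP[ha|/imsetP[a' ha' ->]] /orP[hb|/imsetP[b' hb' ->]].
  + by rewrite CC.
  + by apply/orP; right; apply/imsetP; exists (txor a b'); rewrite ?CC ?txorA.
  + by apply/orP; right; apply/imsetP; exists (txor a' b); rewrite ?CC // -!txorA (txorC x b).
  + by rewrite -txorA (txorC x) -txorA txorvv txor0 CC.
- apply: (leq_trans (leq_card_setU _ _)).
  by rewrite mul2n -addnn leq_add2l leq_imset_card.
- apply: leq_trans hx; rewrite leq_mul2r; apply/orP; right.
  apply: subset_leq_card; apply/fintype.subsetP => v; rewrite !inE => /forall_inP h.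
  apply/andP; split; apply/forall_inP => c hc.
  + by apply: h; rewrite inE hc.
  + rewrite -txorA; apply: h; rewrite inE; apply/orP; right.
    by apply/imsetP; exists c => //; rewrite txorC.
Qed.

Lemma xor_closed_iter (R : realType) S (t : nat) : (#|S| <= 2 ^ n)%N ->
  exists C, [/\ xor_closed C, (#|C| <= 2 ^ t)%N &
    (#|uncovered S C|%:R : R) <= (2 ^ n)%:R * (1 - #|S|%:R / (2 ^ n)%:R) ^+ (2 ^ t)].
Proof.
move=> hS.
have N0 : (0 : R) < (2 ^ n)%:R by rewrite ltr0n expn_gt0.
elim: t => [|t [C [hC hc hu]]].
  exists [set zero_tuple n]; split.
  - split; first by rewrite inE.
    by move=> c c'; rewrite !inE => /eqP -> /eqP ->; rewrite txorvv.
  - by rewrite cards1.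
  - have -> : uncovered S [set zero_tuple n] = ~: S.
      apply/setP => v; rewrite !inE; apply/forall_inP/idP => [/(_ _ (set11 _))|h c].
        by rewrite txor0.
      by rewrite inE => /eqP ->; rewrite txor0.
    rewrite cardsCs finset.setCK card_tuple card_bool expr1 natrB // mulrBr mulr1.
    by rewrite mulrCA divff ?mulr1 // gt_eqF.
have [C' [hC' hc' hu']] := xor_closed_double S hC.
exists C'; split => //; first by rewrite expnS (leq_trans hc') // leq_mul2l hc orbT.
have x0 : (0 : R) <= 1 - #|S|%:R / (2 ^ n)%:R.
  by rewrite subr_ge0 ler_pdivrMr // mul1r ler_nat.
set x := (1 - _) in x0 hu *.
rewrite -(ler_pM2r N0); apply: le_trans (_ : _ <= #|uncovered S C|%:R * #|uncovered S C|%:R) _.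
  by rewrite -!natrM ler_nat.
apply: le_trans (ler_pM (ler0n _ _) (ler0n _ _) hu hu) _.
by rewrite expnSr exprM expr2 le_eqVlt; apply/orP; left; apply/eqP; ring.
Qed.

Lemma uncovered_eq0 (R : realType) S C t :
  (#|S| <= 2 ^ n)%N -> (n.+1 * 2 ^ n <= #|S| * 2 ^ t)%N ->
  (#|uncovered S C|%:R : R) <= (2 ^ n)%:R * (1 - #|S|%:R / (2 ^ n)%:R) ^+ (2 ^ t) ->
  #|uncovered S C| = 0%N.
Proof.
move=> hS ht hu; apply/eqP; rewrite -leqn0 -ltnS -(ltr_nat R).
have N0 : (0 : R) < (2 ^ n)%:R by rewrite ltr0n expn_gt0.
apply: le_lt_trans hu _; apply: le_lt_trans (expn2_mul_expR_lt1 R n).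
rewrite ler_pM2l //; apply: le_trans (exprn_one_sub_le_expR _ _) _.
  by rewrite ler_pdivrMr // mul1r ler_nat.
rewrite ler_expR lerN2 mulrA ler_pdivlMr // -!natrM ler_nat.
by rewrite [(2 ^ t * _)%N]mulnC.
Qed.

(* The real type [R] only hosts the exponential estimate. *)
Lemma exists_xor_closed_cover (R : realType) S : (0 < #|S|)%N ->
  exists C, [/\ xor_closed C, (forall v, exists2 c, c \in C & txor v c \in S) &
    (#|C| * #|S| <= 2 * n.+1 * 2 ^ n)%N].
Proof.
move=> s0; have hS : (#|S| <= 2 ^ n)%N by rewrite -card_bool -card_tuple max_card.
have ex : exists t, (n.+1 * 2 ^ n <= #|S| * 2 ^ t)%N.
  exists (n.+1 * 2 ^ n)%N; rewrite (leq_trans (ltnW (ltn_expl _ (ltnSn 1)))) //.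
  by rewrite leq_pmull.
case: (ex_minnP ex) => t ht tmin.
have ht2 : (#|S| * 2 ^ t <= 2 * n.+1 * 2 ^ n)%N.
  case: t ht tmin => [|t] ht tmin; first by rewrite muln1 (leq_trans hS) // leq_pmull.
  have : ~~ (n.+1 * 2 ^ n <= #|S| * 2 ^ t)%N by apply/negP => /tmin; rewrite ltnn.
  by rewrite -ltnNge expnS mulnCA -mulnA leq_mul2l => /ltnW ->.
have [C [hC hc hu]] := xor_closed_iter R t hS.
have u0 := uncovered_eq0 hS ht hu.
exists C; split=> //; last by rewrite (leq_trans _ ht2) // mulnC leq_mul2l hc orbT.
move=> v; move/eqP: u0; rewrite cards_eq0 => /eqP/setP/(_ v).
rewrite !inE => /negbT; rewrite negb_forall_in => /existsP [c /andP [hcC]].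
by rewrite negbK; exists c.
Qed.

End Covering.

Definition wwl_set n beta p : {set n.-tuple bool} := [set v | wwl beta p v].

Section WindowWeightLimited.
Variables beta p : nat.

Lemma wwlP n (w : n.-tuple bool) :
  reflect (forall j, (j + beta <= n)%N -> (\sum_(l < beta) cell w (j + l) <= p)%N)
          (wwl beta p w).
Proof.
apply: (iffP forallP) => [h j hj|h j]; last by apply/implyP; apply: h.
have hjn : (j < n.+1)%N by rewrite ltnS (leq_trans (leq_addr _ _) hj).
by move: (h (Ordinal hjn)) => /implyP /(_ hj).
Qed.

Lemma wwl_zero_tuple n : wwl beta p (zero_tuple n).
Proof. by apply/wwlP => j _; rewrite big1 // => l _; rewrite cell_zero_tuple. Qed.

(* [S_card] counts a classical set comprehension, not a finset. *)
Lemma S_cardE n : S_card n beta p = #|wwl_set n beta p|.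
Proof. by apply: eq_card => v; rewrite inE; apply/idP/idP; rewrite in_setE. Qed.

Lemma S_card_gt0 n : (0 < S_card n beta p)%N.
Proof.
by rewrite S_cardE; apply/card_gt0P; exists (zero_tuple n); rewrite inE wwl_zero_tuple.
Qed.

Lemma cell_mktuple n (f : nat -> bool) t :
  cell [tuple f (val i) | i < n] t = if (t < n)%N then f t else false.
Proof.
case: ifP => ht; first by have := nth_mktuple (fun i : 'I_n => f (val i)) false (Ordinal ht).
by rewrite cell_out // leqNgt ht.
Qed.

(* A WWL word splits into a WWL prefix and a WWL suffix. *)
Lemma S_card_add m k : (S_card (m + k) beta p <= S_card m beta p * S_card k beta p)%N.
Proof.
pose pre (v : (m + k).-tuple bool) := [tuple cell v (val i) | i < m].
pose suf (v : (m + k).-tuple bool) := [tuple cell v (m + val i) | i < k].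
have split_inj : injective (fun v => (pre v, suf v)).
  move=> v v' /pair_equal_spec [hp hs]; apply: eq_tuple_cell => t.
  case: (ltnP t m) => htm.
    by have := congr1 (fun x => cell x t) hp; rewrite !cell_mktuple htm.
  case: (ltnP t (m + k)) => htk; last by rewrite !cell_out.
  have := congr1 (fun x => cell x (t - m)) hs.
  by rewrite !(@cell_mktuple _ (fun y => cell _ (m + y))) ltn_subLR // subnKC // htk.
rewrite !S_cardE -cardsX -(card_imset _ split_inj); apply: subset_leq_card.
apply/fintype.subsetP => x /imsetP [v]; rewrite !inE => /wwlP hv ->.
apply/andP; split; apply/wwlP => j hj /=.
- rewrite (eq_bigr (fun l : 'I_beta => (cell v (j + l) : nat))).
    by apply: hv; rewrite (leq_trans hj) // leq_addr.
  by move=> l _; rewrite cell_mktuple (leq_trans _ hj) // ltn_add2l ltn_ord.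
- rewrite (eq_bigr (fun l : 'I_beta => (cell v ((m + j) + l) : nat))).
    by apply: hv; rewrite -addnA leq_add2l.
  move=> l _; rewrite (@cell_mktuple _ (fun t => cell v (m + t))) addnA.
  by rewrite (leq_trans _ hj) // ltn_add2l ltn_ord.
Qed.

End WindowWeightLimited.

Section Log2.
Variable R : realType.

Lemma ln2_gt0 : (0 : R) < ln 2.
Proof. by rewrite ln_gt0 // ltr1n. Qed.

Lemma log2_nat_ge0 x : (0 < x)%N -> 0 <= log2 (x%:R : R).
Proof. by move=> x0; rewrite divr_ge0 ?ln_ge0 ?ler1n // ltW // ln2_gt0. Qed.

Lemma ler_log2_nat x y : (0 < x)%N -> (x <= y)%N -> log2 (x%:R : R) <= log2 y%:R.
Proof.
move=> x0 xy; rewrite ler_pM2r ?invr_gt0 ?ln2_gt0 //.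
by rewrite ler_ln ?posrE ?ltr0n ?ler_nat // (leq_trans x0).
Qed.

Lemma log2_natM x y : (0 < x)%N -> (0 < y)%N ->
  log2 ((x * y)%:R : R) = log2 x%:R + log2 y%:R.
Proof. by move=> x0 y0; rewrite /log2 natrM lnM ?posrE ?ltr0n // mulrDl. Qed.

Lemma log2_2 : log2 (2%:R : R) = 1.
Proof. by rewrite /log2 divff // gt_eqF // ln2_gt0. Qed.

Lemma natr_log2K M : (0 < M)%N -> 2 `^ log2 (M%:R : R) = M%:R.
Proof.
move=> M0; rewrite /powR pnatr_eq0 /= divfK ?gt_eqF ?ln2_gt0 //.
by rewrite lnK // posrE ltr0n.
Qed.

End Log2.

Section Codes.
Variables (R : realType) (n : nat).
(* Plain [code] is shadowed by [constructive_ereal.code]. *)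
Implicit Types (c : Defs.code R n) (ms : nat -> nat) (S C : {set n.-tuple bool}).

Lemma nchanges1 c ms beta i j : nchanges c ms 1 beta i j =
  (\sum_(l < beta) cell (txor (state c ms i) (state c ms i.+1)) (j + l))%N.
Proof.
by rewrite /nchanges big_ord1 addn0; apply: eq_bigr => l _; rewrite cell_txor negb_eqb.
Qed.

Lemma constrained1P c beta p : constrained c 1 beta p <->
  forall ms, (forall i, (1 <= i)%N -> is_msg c i (ms i)) ->
    forall i, wwl beta p (txor (state c ms i) (state c ms i.+1)).
Proof.
split=> h ms hms i; first by apply/wwlP => j hj; rewrite -nchanges1; apply: h.
by move=> j hj; rewrite nchanges1; move/wwlP: (h ms hms i); apply.
Qed.

Lemma eq_state c ms ms' t :
  (forall k, (k <= t)%N -> ms k = ms' k) -> state c ms t = state c ms' t.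
Proof.
elim: t => [//|t IH] h /=.
by rewrite h // IH // => k hk; apply: h; rewrite (leq_trans hk).
Qed.

Lemma nmsg_gt0 (r : R) : 0 <= r -> (0 < nmsg n r)%N.
Proof.
move=> r0; rewrite /nmsg truncn_ge_nat ?powR_ge0 // /powR pnatr_eq0 /=.
apply: le_trans (expR_ge1Dx _); by rewrite lerDl !mulr_ge0 // ln_ge0 // ler1n.
Qed.

Lemma nmsg_log2 M : (0 < n)%N -> (0 < M)%N -> nmsg n (log2 (M%:R : R) / n%:R) = M.
Proof.
move=> n0 M0; rewrite /nmsg mulrCA divff ?pnatr_eq0 -?lt0n // mulr1.
by rewrite natr_log2K // natrK.
Qed.

Lemma has_rate_cst c r : (forall i, wrate c i = r) -> has_rate c r.
Proof.
move=> h; rewrite /has_rate -cvg_shiftS /=.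
suff -> : (fun m : nat => (m.+1%:R)^-1 * \sum_(1 <= i < m.+2) wrate c i) = fun=> r.
  exact: cvg_cst.
apply: funext => m; under eq_bigr do rewrite h.
by rewrite sumr_const_nat subn1 /= -[r *+ _]mulr_natl mulKf.
Qed.

(* Sending message [k] at write [i] after sending [1] at all earlier writes
   yields pairwise distinct WWL change patterns (the decoder tells them apart). *)
Lemma nmsg_le_S_card c beta p i : valid_code c -> constrained c 1 beta p ->
  (1 <= i)%N -> (nmsg n (wrate c i) <= S_card n beta p)%N.
Proof.
move=> hv /constrained1P hc i1.
set N := nmsg n (wrate c i); set u := state c (fun=> 1%N) i.-1.
have [_ hdec] := hv i i1.
have msg_ok (k : 'I_N) : is_msg c i k.+1 by rewrite /is_msg ltn_ord.
have ms1 k : (1 <= k)%N -> is_msg c k 1.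
  by move=> k1; rewrite /is_msg nmsg_gt0 //; case: (hv k k1).
pose pat (k : 'I_N) := txor u (enc c i k.+1 u).
have pat_inj : injective pat.
  move=> k k' /txor_inj e; apply: val_inj; apply: succn_inj.
  by rewrite -(hdec _ u (msg_ok k)) e hdec.
rewrite S_cardE -(card_ord N) -(card_imset _ pat_inj).
apply: subset_leq_card; apply/fintype.subsetP => _ /imsetP [k _ ->].
pose ms t := if t == i then k.+1 else 1%N.
have hms t : (1 <= t)%N -> is_msg c t (ms t).
  by rewrite /ms; case: eqP => [->|_]; [move=> _; apply: msg_ok | apply: ms1].
have := hc ms hms i.-1; rewrite /= (prednK i1) {2}/ms eqxx inE.
rewrite (@eq_state c ms (fun=> 1%N)) // => t ht; rewrite /ms ifN_eq //.
by apply: contraTneq ht => ->; rewrite -ltnNge prednK.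
Qed.

Lemma wrate_le c beta p i : (0 < n)%N -> valid_code c -> constrained c 1 beta p ->
  (1 <= i)%N -> wrate c i <= (log2 ((S_card n beta p)%:R : R) + 1) / n%:R.
Proof.
move=> n0 hv hc i1; have hN := nmsg_le_S_card hv hc i1.
set s := S_card n beta p in hN *; set r := wrate c i in hN *.
have s0 : (0 < s)%N := S_card_gt0 beta p n.
have h1 : 2 `^ (n%:R * r) < (2 * s)%:R :> R.
  apply: lt_le_trans (truncnS_gt _) _; rewrite ler_nat.
  by rewrite mul2n -addnn -add1n leq_add.
have h2 : n%:R * r * ln 2 < ln 2 + ln s%:R.
  rewrite -ln_powR -lnM ?posrE ?ltr0n // -natrM.
  by rewrite ltr_ln ?posrE ?powR_gt0 ?ltr0n ?muln_gt0.
have n0' : (0 : R) < n%:R by rewrite ltr0n.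
have l2 := ln2_gt0 R.
rewrite ler_pdivlMr // -(ler_pM2r l2) mulrDl mul1r divfK ?gt_eqF // (mulrC r).
lra.
Qed.

Lemma rate_le c beta p r : (0 < n)%N -> valid_code c -> constrained c 1 beta p ->
  has_rate c r -> r <= (log2 ((S_card n beta p)%:R : R) + 1) / n%:R.
Proof.
move=> n0 hv hc hr; set B := _ / _.
apply: (ler_cvg_to hr (cvg_cst B)); apply: nearW => -[|m].
  by rewrite invr0 mul0r divr_ge0 ?addr_ge0 ?log2_nat_ge0 ?S_card_gt0.
rewrite ler_pdivrMl ?ltr0n //.
apply: le_trans (_ : _ <= \sum_(1 <= i < m.+2) B) _.
  by apply: ler_sum_nat => i /andP [i1 _]; apply: wrate_le.
by rewrite sumr_const_nat subn1 mulr_natl.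
Qed.

Definition coset (C : {set n.-tuple bool}) v := [set txor c v | c in C].

Definition cosets C := [set coset C v | v : n.-tuple bool].

Section Cosets.
Variable C : {set n.-tuple bool}.
Hypothesis hC : xor_closed C.

Lemma coset_txor a v : a \in C -> coset C (txor a v) = coset C v.
Proof.
case: hC => _ CC ha; apply/setP => x.
apply/imsetP/imsetP => [[b hb ->]|[b hb ->]]; exists (txor b a); try exact: CC.
  by rewrite txorA.
by rewrite -txorA txorK.
Qed.

Lemma mem_coset v : v \in coset C v.
Proof. by apply/imsetP; exists (zero_tuple n); [case: hC | rewrite txorC txor0]. Qed.

Lemma expn_le_card_cosets : (2 ^ n <= #|cosets C| * #|C|)%N.
Proof.
pose rep (D : {set n.-tuple bool}) := odflt (zero_tuple n) [pick x in D].
have : [set: n.-tuple bool] \subset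
         [set txor cx.2 (rep cx.1) | cx in finset.setX (cosets C) C].
  apply/fintype.subsetP => v _.
  have : rep (coset C v) \in coset C v.
    by rewrite /rep; case: pickP => [x //|/(_ v)]; rewrite mem_coset.
  case/imsetP => c0 hc0 hr; apply/imsetP; exists (coset C v, c0).
    by rewrite finset.in_setX hc0 andbT; apply/imsetP; exists v.
  by rewrite /= hr txorK.
move/subset_leq_card; rewrite cardsT card_tuple card_bool => /leq_trans; apply.
by rewrite (leq_trans (leq_imset_card _ _)) // cardsX.
Qed.

End Cosets.

(* Message [m] is the [m]-th coset of [C]; the encoder moves from [u] into that
   coset along a pattern of [S], which exists because [S] meets every coset. *)
Lemma exists_code_of_cover S C : (0 < n)%N -> zero_tuple n \in S -> xor_closed C ->
  (forall v, exists2 a, a \in C & txor v a \in S) ->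
  exists c, [/\ valid_code c,
    forall ms i, txor (state c ms i) (state c ms i.+1) \in S &
    has_rate c (log2 (#|cosets C|%:R : R) / n%:R)].
Proof.
move=> n0 S0 hC cov; set M := #|cosets C|.
have M0 : (0 < M)%N.
  by move: (expn_le_card_cosets hC); rewrite -/M; case: (M); rewrite // leqNgt expn_gt0.
pose target m := nth finset.set0 (enum (cosets C)) m.-1.
pose encf (m : nat) (u : n.-tuple bool) :=
  if [pick w in S | coset C (txor u w) == target m] is Some w then txor u w else u.
pose decf (v : n.-tuple bool) := (index (coset C v) (enum (cosets C))).+1.
have encS m u : exists2 w, w \in S & encf m u = txor u w.
  rewrite /encf; case: pickP => [w /andP [hw _]|_]; first by exists w.
  by exists (zero_tuple n); rewrite ?txor0.
have decK m u : (1 <= m <= M)%N -> decf (encf m u) = m.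
  case/andP=> m1 mM.
  have mQ : (m.-1 < size (enum (cosets C)))%N by rewrite -cardE; case: (m) m1 mM.
  have /imsetP [y _ hy] : target m \in cosets C by rewrite -mem_enum mem_nth.
  have [a ha haS] := cov (txor u y).
  have hw : coset C (txor u (txor (txor u y) a)) = target m.
    by rewrite -!txorA txorK txorC coset_txor.
  rewrite /encf; case: pickP => [w /andP [_ /eqP hw']|/(_ (txor (txor u y) a))]; last first.
    by rewrite haS hw eqxx.
  by rewrite /decf hw' index_uniq ?enum_uniq //; case: (m) m1.
exists (Code (fun=> log2 (M%:R : R) / n%:R) (fun=> encf) (fun=> decf)); split.
- move=> i _; split; first by rewrite divr_ge0 ?log2_nat_ge0.
  by move=> m u; rewrite /is_msg /= nmsg_log2 //; exact: decK.
- move=> ms i /=; set u := state _ ms i.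
  by have [w hw ->] := encS (ms i.+1) u; rewrite txorK.
- exact: has_rate_cst.
Qed.

Lemma exists_constrained_code beta p : (0 < n)%N ->
  exists2 M, (S_card n beta p <= 2 * n.+1 * M)%N &
    exists c, [/\ valid_code c, constrained c 1 beta p & has_rate c (log2 (M%:R : R) / n%:R)].
Proof.
move=> n0; set S := wwl_set n beta p.
have S0 : zero_tuple n \in S by rewrite inE wwl_zero_tuple.
have [|C [hC cov hCS]] := @exists_xor_closed_cover n R S; first by rewrite -S_cardE S_card_gt0.
have [c [hv hS hr]] := exists_code_of_cover n0 S0 hC cov.
exists #|cosets C|; last first.
  exists c; split=> //; apply/constrained1P => ms _ i.
  by move: (hS ms i); rewrite inE.
rewrite S_cardE -(leq_pmul2r (expn_gt0 2 n)).
apply: (leq_trans (leq_mul (leqnn _) (expn_le_card_cosets hC))).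
have := leq_mul (leqnn #|cosets C|) hCS; rewrite -/S.
by move: #|S| #|C| #|cosets C| (2 ^ n)%N => s a m N; nia.
Qed.

Lemma Cn_near_wwl_rate beta p : (0 < n)%N ->
  wwl_rate R beta p n - (n%:R)^-1 * log2 ((2 * n.+1)%:R) <= Cn R n 1 beta p <=
  wwl_rate R beta p n + (n%:R)^-1 * log2 ((2 * n.+1)%:R).
Proof.
move=> n0; have [M hSM [c [hv hc hr]]] := exists_constrained_code beta p n0.
have M0 : (0 < M)%N.
  by rewrite lt0n; apply: contraTneq hSM => ->; rewrite muln0 -ltnNge S_card_gt0.
have g1 : 1 <= log2 ((2 * n.+1)%:R : R).
  by have := @ler_log2_nat R 2 (2 * n.+1) isT (leq_pmulr 2 (ltn0Sn n)); rewrite log2_2.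
rewrite /wwl_rate -mulrBr -mulrDr /Cn; set rates := [set r : R | _]%classic.
set s := log2 _; set G := log2 _.
have ub : ubound rates ((s + 1) / n%:R).
  by move=> r [c' [hv' [hc' hr']]]; apply: rate_le hr'.
have hM : rates (log2 (M%:R : R) / n%:R) by exists c.
apply/andP; split.
  apply: le_trans (ub_le_sup _ hM); last by exists ((s + 1) / n%:R).
  rewrite mulrC ler_pM2r ?invr_gt0 ?ltr0n // lerBlDl -log2_natM ?muln_gt0 //.
  exact: ler_log2_nat (S_card_gt0 beta p n) hSM.
apply: le_trans (ge_sup _ ub) _; first by exists (log2 (M%:R : R) / n%:R).
by rewrite [_^-1 * _]mulrC ler_pM2r ?invr_gt0 ?ltr0n // lerD2l.
Qed.

End Codes.

Local Open Scope classical_set_scope.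

Section Fekete.
Variables (R : realType) (a : nat -> R).
Hypothesis a_ge0 : forall n, 0 <= a n.
Hypothesis a_subadd : forall m k, a (m + k) <= a m + a k.

Lemma subadd_mul_add q m r : a (q * m + r) <= q%:R * a m + a r.
Proof.
elim: q => [|q IH]; first by rewrite mul0n add0n mul0r add0r.
rewrite mulSn -addnA (le_trans (a_subadd _ _)) // -addn1 natrD mulrDl mul1r.
lra.
Qed.

Lemma subadd_le_lin r : a r <= a 0 + r%:R * a 1.
Proof. by have := subadd_mul_add r 1 0; rewrite muln1 addn0 addrC. Qed.

Lemma subadditive_cvg : exists L : R, (fun n : nat => (n%:R)^-1 * a n) @ \oo --> L.
Proof.
pose E := [set a n / n%:R | n in [set n | (0 < n)%N]].
have hE : has_inf E.
  by split; [exists (a 1 / 1); exists 1%N | exists 0 => _ [n _ <-]; rewrite divr_ge0].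
exists (inf E); apply/cvgrPdist_le => eps eps0.
have eps20 : 0 < eps / 2 by rewrite divr_gt0.
have [_ [m m0 <-] ham] := inf_adherent eps20 hE.
set L := inf E in ham *; set K := a 0 + m%:R * a 1.
have m0' : (0 : R) < m%:R by rewrite ltr0n.
exists (Num.truncn (2 * K / eps)).+1 => // n /= hn.
have n0 : (0 < n)%N by apply: leq_trans hn.
have n0' : (0 : R) < n%:R by rewrite ltr0n.
have hK : K / n%:R <= eps / 2.
  have : 2 * K / eps < n%:R by apply: lt_le_trans (truncnS_gt _) _; rewrite ler_nat.
  rewrite ler_pdivrMr // ltr_pdivrMr //; lra.
have hqm : ((n %/ m)%:R * a m <= n%:R * (a m / m%:R)).
  by rewrite mulrA ler_pdivlMr // mulrAC ler_wpM2r // -natrM ler_nat leq_trunc_div.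
have hr : a (n %% m) <= K.
  by rewrite (le_trans (subadd_le_lin _)) // lerD2l ler_wpM2r // ler_nat ltnW // ltn_mod.
have han : a n <= n%:R * (a m / m%:R) + K.
  by rewrite {1}(divn_eq n m) (le_trans (subadd_mul_add _ _ _)) // lerD.
have lo : L <= (n%:R)^-1 * a n.
  by apply: ge_inf; [case: hE | exists n; rewrite // mulrC].
have up : (n%:R)^-1 * a n <= a m / m%:R + K / n%:R.
  by rewrite mulrC ler_pdivrMr // mulrDl divfK ?gt_eqF // mulrC.
by rewrite distrC ger0_norm ?subr_ge0 //; lra.
Qed.

End Fekete.

Lemma cvg_log2_linear_div (R : realType) :
  (fun n : nat => (n%:R)^-1 * log2 ((2 * n.+1)%:R : R)) @ \oo --> (0 : R).
Proof.
apply/cvgrPdist_le => e e0.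
set d := e * ln 2.
have d0 : 0 < d by rewrite mulr_gt0 // ln2_gt0.
exists (Num.truncn (8 / d ^+ 2)).+1 => // n /= hn.
have n0' : (1 : R) <= n%:R by rewrite ler1n (leq_trans _ hn).
have d20 : 0 < d ^+ 2 by rewrite exprn_gt0.
have h8 : 8 < d ^+ 2 * n%:R.
  rewrite mulrC -ltr_pdivrMr //.
  by apply: lt_le_trans (truncnS_gt _) _; rewrite ler_nat.
(* [exp (d n) >= (d n)^2 / 2 >= 4 n >= 2 (n + 1)] *)
have hexp : (2 * n.+1)%:R <= expR (d * n%:R).
  apply: le_trans (expR_ge1Dxn 1 (mulr_ge0 (ltW d0) (ler0n _ n))).
  rewrite natrM -[n.+1%:R]natr1 exprMn (_ : 2`!%:R = 2 :> R) //.
  have : 8 * n%:R <= d ^+ 2 * n%:R * n%:R by rewrite ler_pM2r ?ltW // (lt_le_trans ltr01).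
  nra.
have hln : ln ((2 * n.+1)%:R : R) <= d * n%:R by rewrite -ler_expR lnK // posrE ltr0n.
rewrite sub0r normrN ger0_norm; last by rewrite mulr_ge0 // log2_nat_ge0.
rewrite mulrC ler_pdivrMr ?(lt_le_trans ltr01) //.
by rewrite /log2 ler_pdivrMr ?ln2_gt0 // (mulrC e) -mulrA (mulrC n%:R).
Qed.

Theorem theorem5 (R : realType) (beta p : nat) :
  (0 < p)%N -> (p <= beta)%N ->
  exists L : R,
    (fun n : nat => Cn R n 1 beta p) @ \oo --> L /\
    (fun n : nat => wwl_rate R beta p n) @ \oo --> L.
Proof.
move=> _ _.
have [L hL] : exists L : R, wwl_rate R beta p n @[n --> \oo] --> L.
  apply: subadditive_cvg => [n|m k]; first by rewrite log2_nat_ge0 ?S_card_gt0.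
  rewrite -log2_natM ?S_card_gt0 //.
  exact: ler_log2_nat (S_card_gt0 _ _ _) (S_card_add _ _ _ _).
exists L; split=> //.
pose g n := (n%:R)^-1 * log2 ((2 * n.+1)%:R : R).
have cvg_g : g n @[n --> \oo] --> 0 := @cvg_log2_linear_div R.
apply: (@squeeze_cvgr _ _ _ _ (fun n => wwl_rate R beta p n - g n)
                              (fun n => wwl_rate R beta p n + g n)).
- by exists 1%N => // n /= n0; apply: Cn_near_wwl_rate.
- by rewrite -[L]subr0; apply: cvgB.
- by rewrite -[L]addr0; apply: cvgD.
Qed.
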